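(* Let $\gamma\subset\mathbb R^3$ be a closed curve satisfying a three-point condition with constant $\Delta\in[0,\infty)$. Then for any two points $q_1=(x_1,y_1,z_1)$, $q_2=(x_2,y_2,z_2)$ on $\gamma$, $$(z_1-z_2)^2\le\Delta^2\big[(x_1-x_2)^2+(y_1-y_2)^2\big].$$
   Context: The slope $S_P$ of a plane $P\subset\mathbb R^3$ is $\tan\Theta$, $\Theta\in[0,\pi/2]$ the dihedral angle between $P$ and the $xy$-plane ($+\infty$ if $P$ is vertical). For $\gamma:S^1\to\mathbb R^3$, $|P\cap\gamma|:=\#\{u\in S^1:\gamma(u)\in P\}$. $\gamma$ satisfies a three-point condition with constant $\Delta$ if $S_P\le\Delta$ for every plane $P$ with $|P\cap\gamma|\ge3$. *)

From Stdlib Require Import Reals.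
From Coquelicot Require Import Rbar.
Open Scope R_scope.

Definition point := (R * R * R)%type.
Definition px (p : point) : R := fst (fst p).
Definition py (p : point) : R := snd (fst p).
Definition pz (p : point) : R := snd p.

Definition in_plane (a b c d : R) (p : point) : Prop :=
  a * px p + b * py p + c * pz p = d.

(* Slope S_P = tan(Theta), Theta the dihedral angle between P and the
   xy-plane: tan Theta = sqrt(a^2+b^2)/|c|, and +oo if P is vertical (c = 0). *)
Definition plane_slope (a b c : R) : Rbar :=
  if Req_EM_T c 0 then p_infty else Finite (sqrt (a ^ 2 + b ^ 2) / Rabs c).

(* A closed curve gamma : S^1 -> R^3, with S^1 = R/Z: gamma is a continuous
   1-periodic map R -> R^3; the parameter u in S^1 corresponds to a unique
   representative in [0,1). *)
Definition closed_curve (gamma : R -> point) : Prop :=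
  (forall t, gamma (t + 1) = gamma t) /\
  (forall t, continuity_pt (fun s => px (gamma s)) t) /\
  (forall t, continuity_pt (fun s => py (gamma s)) t) /\
  (forall t, continuity_pt (fun s => pz (gamma s)) t).

(* |P ∩ gamma| >= 3 : at least three distinct parameters u in S^1 = [0,1)
   with gamma(u) in P. *)
Definition meets_at_least_3 (gamma : R -> point) (a b c d : R) : Prop :=
  exists u1 u2 u3 : R,
    0 <= u1 < 1 /\ 0 <= u2 < 1 /\ 0 <= u3 < 1 /\
    u1 <> u2 /\ u1 <> u3 /\ u2 <> u3 /\
    in_plane a b c d (gamma u1) /\ in_plane a b c d (gamma u2) /\
    in_plane a b c d (gamma u3).

Definition three_point_condition (gamma : R -> point) (Delta : R) : Prop :=
  forall a b c d : R, (a <> 0 \/ b <> 0 \/ c <> 0) ->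
    meets_at_least_3 gamma a b c d ->
    Rbar_le (plane_slope a b c) (Finite Delta).

(* Three points of the curve always lie on a common plane; when two of them
   are q1 and q2, that plane contains the direction q1 - q2, and a plane of
   slope at most Delta contains no direction steeper than Delta. *)
From Stdlib Require Import Reals Lra Psatz ZArith.
From Coquelicot Require Import Rbar.
Open Scope R_scope.

Definition dot (n v : point) : R := px n * px v + py n * py v + pz n * pz v.

Definition cross (d e : point) : point :=
  (py d * pz e - pz d * py e, pz d * px e - px d * pz e,
   px d * py e - py d * px e).

Definition vsub (p q : point) : point :=
  (px p - px q, py p - py q, pz p - pz q).

Definition nonzero (v : point) : Prop := px v <> 0 \/ py v <> 0 \/ pz v <> 0.

Lemma nonzero_or_null (v : point) :
  nonzero v \/ (px v = 0 /\ py v = 0 /\ pz v = 0).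
Proof.
  unfold nonzero.
  destruct (Req_EM_T (px v) 0), (Req_EM_T (py v) 0), (Req_EM_T (pz v) 0); tauto.
Qed.

Lemma dot_cross_l (d e : point) : dot (cross d e) d = 0.
Proof. unfold dot, cross, px, py, pz; simpl; ring. Qed.

Lemma dot_cross_r (d e : point) : dot (cross d e) e = 0.
Proof. unfold dot, cross, px, py, pz; simpl; ring. Qed.

(* When [cross d e = 0], each of the three normals to [d] below is also
   normal to [e]: its dot product with [e] is a coordinate of [cross d e]. *)
Lemma common_normal_of_parallel (d e : point) :
  px (cross d e) = 0 -> py (cross d e) = 0 -> pz (cross d e) = 0 ->
  nonzero d -> exists n, nonzero n /\ dot n d = 0 /\ dot n e = 0.
Proof.
  unfold cross, nonzero, dot, px, py, pz; simpl.
  intros Hx Hy Hz Hd.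
  destruct (Req_EM_T (fst (fst d)) 0) as [Hd1|Hd1];
    [destruct (Req_EM_T (snd (fst d)) 0) as [Hd2|Hd2]|].
  - exists (snd d, 0, - fst (fst d)); simpl.
    split; [lra|split; [ring|lra]].
  - exists (snd (fst d), - fst (fst d), 0); simpl.
    split; [lra|split; [ring|lra]].
  - exists (snd (fst d), - fst (fst d), 0); simpl.
    split; [lra|split; [ring|lra]].
Qed.

Lemma exists_common_normal (d e : point) :
  exists n, nonzero n /\ dot n d = 0 /\ dot n e = 0.
Proof.
  destruct (nonzero_or_null (cross d e)) as [Hc|[Hx [Hy Hz]]].
  { exists (cross d e); split; [exact Hc|split; [apply dot_cross_l|apply dot_cross_r]]. }
  destruct (nonzero_or_null d) as [Hd|Hd].
  { exact (common_normal_of_parallel d e Hx Hy Hz Hd). }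
  destruct (nonzero_or_null e) as [He|He].
  - assert (Hed : px (cross e d) = 0 /\ py (cross e d) = 0 /\ pz (cross e d) = 0).
    { unfold cross, px, py, pz in *; simpl in *; lra. }
    destruct Hed as [Hx' [Hy' Hz']].
    destruct (common_normal_of_parallel e d Hx' Hy' Hz' He) as [n [Hn [Hne Hnd]]].
    exists n; tauto.
  - exists (1, 0, 0); unfold nonzero, dot, px, py, pz in *; simpl in *; lra.
Qed.

Lemma plane_slope_le (a b c Delta : R) :
  Rbar_le (plane_slope a b c) (Finite Delta) ->
  c <> 0 /\ a ^ 2 + b ^ 2 <= Delta ^ 2 * c ^ 2.
Proof.
  unfold plane_slope; destruct (Req_EM_T c 0) as [Hc|Hc]; [simpl; tauto|].
  intros Hle; change (sqrt (a ^ 2 + b ^ 2) / Rabs c <= Delta) in Hle.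
  split; [exact Hc|].
  assert (Habs : 0 < Rabs c) by (apply Rabs_pos_lt; exact Hc).
  assert (Hs : sqrt (a ^ 2 + b ^ 2) <= Delta * Rabs c).
  { apply (Rmult_le_compat_r (Rabs c)) in Hle; [|lra].
    unfold Rdiv in Hle; rewrite Rmult_assoc, Rinv_l, Rmult_1_r in Hle; lra. }
  assert (Hsqrt := sqrt_pos (a ^ 2 + b ^ 2)).
  rewrite <- (sqrt_sqrt (a ^ 2 + b ^ 2)) by nra.
  replace (c ^ 2) with (Rabs c ^ 2) by (rewrite RPow_abs, Rabs_right; [reflexivity|apply Rle_ge, pow2_ge_0]).
  nra.
Qed.

(* Cauchy-Schwarz in the xy-plane: [(a dx + b dy)^2 = (c dz)^2] is at most
   [(a^2 + b^2)(dx^2 + dy^2) <= Delta^2 c^2 (dx^2 + dy^2)]. *)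
Lemma slope_le_steepness (n v : point) (Delta : R) :
  Rbar_le (plane_slope (px n) (py n) (pz n)) (Finite Delta) -> dot n v = 0 ->
  pz v ^ 2 <= Delta ^ 2 * (px v ^ 2 + py v ^ 2).
Proof.
  intros Hslope Hdot.
  destruct (plane_slope_le _ _ _ _ Hslope) as [Hc Hab].
  unfold dot in Hdot.
  assert (Hcs : (px n * px v + py n * py v) ^ 2
                <= (px n ^ 2 + py n ^ 2) * (px v ^ 2 + py v ^ 2)).
  { assert (0 <= (px n * py v - py n * px v) ^ 2) by apply pow2_ge_0; nra. }
  assert (Hc2 : 0 < pz n ^ 2) by (rewrite <- Rsqr_pow2; apply Rsqr_pos_lt, Hc).
  assert (Hv : 0 <= px v ^ 2 + py v ^ 2) by nra.
  replace ((px n * px v + py n * py v) ^ 2) with (pz n ^ 2 * pz v ^ 2) in Hcs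
    by (replace (px n * px v + py n * py v) with (- (pz n * pz v)) by lra; ring).
  apply (Rmult_le_reg_l (pz n ^ 2)); [exact Hc2|].
  nra.
Qed.

Lemma periodic_shift_Z (gamma : R -> point) :
  (forall t, gamma (t + 1) = gamma t) ->
  forall (k : Z) t, gamma (t + IZR k) = gamma t.
Proof.
  intros Hper k; induction k as [|k IH|k IH] using Z.peano_ind; intros t.
  - now rewrite Rplus_0_r.
  - rewrite succ_IZR, <- Rplus_assoc, Hper; apply IH.
  - rewrite <- (IH t), <- (Hper (t + IZR (Z.pred k))), <- Z.sub_1_r, minus_IZR.
    f_equal; ring.
Qed.

Lemma periodic_frac_part (gamma : R -> point) :
  (forall t, gamma (t + 1) = gamma t) ->
  forall u, 0 <= frac_part u < 1 /\ gamma u = gamma (frac_part u).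
Proof.
  intros Hper u; split; [destruct (base_fp u); lra|].
  rewrite <- (periodic_shift_Z gamma Hper (Int_part u) (frac_part u)).
  unfold frac_part; f_equal; ring.
Qed.

Lemma exists_third_param (v1 v2 : R) :
  exists u, 0 <= u < 1 /\ u <> v1 /\ u <> v2.
Proof.
  destruct (Req_EM_T v1 0), (Req_EM_T v2 0),
           (Req_EM_T v1 (1/2)), (Req_EM_T v2 (1/2)); subst;
  first [exists 0; lra | exists (1/2); lra | exists (1/4); lra].
Qed.

Lemma three_point_distinct_params (gamma : R -> point) (Delta v1 v2 : R) :
  three_point_condition gamma Delta ->
  0 <= v1 < 1 -> 0 <= v2 < 1 -> v1 <> v2 ->
  (pz (gamma v1) - pz (gamma v2)) ^ 2 <=
  Delta ^ 2 * ((px (gamma v1) - px (gamma v2)) ^ 2 +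
               (py (gamma v1) - py (gamma v2)) ^ 2).
Proof.
  intros H3 Hv1 Hv2 Hne.
  destruct (exists_third_param v1 v2) as [u3 [Hu3 [N1 N2]]].
  destruct (exists_common_normal (vsub (gamma v1) (gamma v2))
                                 (vsub (gamma u3) (gamma v2)))
    as [n [Hn [Hd1 Hd3]]].
  apply (slope_le_steepness n (vsub (gamma v1) (gamma v2))); [|exact Hd1].
  apply (H3 _ _ _ (dot n (gamma v2)) Hn).
  unfold dot, vsub, px, py, pz in Hd1, Hd3.
  exists v1, v2, u3; unfold in_plane, dot, px, py, pz; simpl in *.
  repeat split; auto; lra.
Qed.

Theorem mainTheorem10 (gamma : R -> point) (Delta : R) :
  0 <= Delta ->
  closed_curve gamma ->
  three_point_condition gamma Delta ->
  forall u1 u2 : R,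
    (pz (gamma u1) - pz (gamma u2)) ^ 2 <=
    Delta ^ 2 * ((px (gamma u1) - px (gamma u2)) ^ 2 +
                 (py (gamma u1) - py (gamma u2)) ^ 2).
Proof.
  intros _ [Hper _] H3 u1 u2.
  destruct (periodic_frac_part gamma Hper u1) as [Hv1 ->].
  destruct (periodic_frac_part gamma Hper u2) as [Hv2 ->].
  destruct (Req_EM_T (frac_part u1) (frac_part u2)) as [Heq|Hne].
  - rewrite Heq; nra.
  - exact (three_point_distinct_params gamma Delta _ _ H3 Hv1 Hv2 Hne).
Qed.
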